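(* Let $\beta=(\pi_1,\pi_2)$ be a chainable pair of patterns, and let $\mathcal{M}^\beta$ be the set of complex matrices $\mathbf{A}$ of the same size as matrices in $\mathcal{B}^\beta$ such that $\operatorname{rank}(\mathbf{A}[R_P,C_P])\le r(\pi_1,\pi_2)$ for every $P\in\mathcal{P}(\mathbf{S}_{\pi_1},\mathbf{S}_{\pi_2})$. Then $$\mathcal{B}^\beta=\Sigma^{\pi_1*\pi_2}\cap\mathcal{M}^\beta.$$
   Context: A pattern is a tuple $\pi=(a,b,c,d)$ of positive integers; $\mathbf{S}_\pi:=\mathbf{I}_a\otimes\mathbf{1}_{b\times c}\otimes\mathbf{I}_d\in\{0,1\}^{abd\times acd}$. A $\pi$-factor is a complex $abd\times acd$ matrix with support in that of $\mathbf{S}_\pi$; $\Sigma^\pi$ is the set of $\pi$-factors. Patterns $\pi_1=(a_1,b_1,c_1,d_1),\pi_2=(a_2,b_2,c_2,d_2)$ are chainable if $a_1c_1/a_2=b_2d_2/d_1=:r(\pi_1,\pi_2)$ is an integer, $a_1\mid a_2$, $d_2\mid d_1$; then $\pi_1*\pi_2:=(a_1,b_1d_1/d_2,a_2c_2/a_1,d_2)$. $\mathcal{B}^\beta:=\{\mathbf{X}_1\mathbf{X}_2:\mathbf{X}_i\in\Sigma^{\pi_i}\}$. For binary $\mathbf{L}\in\{0,1\}^{m\times r},\mathbf{R}\in\{0,1\}^{r\times n}$ let $\mathbf{U}_i:=\mathbf{L}[:,i]\mathbf{R}[i,:]$; $\mathcal{P}(\mathbf{L},\mathbf{R})$ is the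 partition of $\{1,\dots,r\}$ into classes of $i\sim j\iff\mathbf{U}_i=\mathbf{U}_j$, and for a class $P$, $R_P\times C_P$ is the support of $\mathbf{U}_i$, $i\in P$. *)

From HB Require Import structures.
From mathcomp Require Import all_boot all_order all_algebra.
From mathcomp Require Import complex.
From mathcomp Require Import Rstruct.
Set Implicit Arguments. Unset Strict Implicit. Unset Printing Implicit Defensive.
Import Order.TTheory GRing.Theory Num.Theory.

Definition Cplx := complex Rdefinitions.R.

Record pattern := Pattern { pa : nat; pb : nat; pc : nat; pd : nat }.

Definition pattern_pos (p : pattern) : Prop :=
  [/\ 0 < pa p, 0 < pb p, 0 < pc p & 0 < pd p]%N.

Definition nrows (p : pattern) : nat := (pa p * pb p * pd p)%N.
Definition ncols (p : pattern) : nat := (pa p * pc p * pd p)%N.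

(* Entry (i,j) (0-based, row-major Kronecker indexing) of
   S_p = I_a (x) 1_{b x c} (x) I_d : row i = i1*(b*d) + i2*d + i3,
   column j = j1*(c*d) + j2*d + j3; the entry is 1 iff i1 = j1 and i3 = j3. *)
Definition S_entry (p : pattern) (i j : nat) : bool :=
  [&& (i < nrows p)%N, (j < ncols p)%N,
      i %/ (pb p * pd p) == j %/ (pc p * pd p) & i %% pd p == j %% pd p].

(* S_p as a binary matrix (used at size nrows p x ncols p, possibly given via
   propositionally equal dimensions) *)
Definition Smx (p : pattern) (m n : nat) : 'M[bool]_(m, n) :=
  \matrix_(i < m, j < n) S_entry p i j.

Definition is_factor (p : pattern) {m n : nat} (X : 'M[Cplx]_(m, n)) : Prop :=
  m = nrows p /\ n = ncols p /\
  forall (i : 'I_m) (j : 'I_n), S_entry p i j = false -> X i j = 0%R.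

Definition chainable (p1 p2 : pattern) : Prop :=
  [/\ (pa p2 %| pa p1 * pc p1)%N, (pd p1 %| pb p2 * pd p2)%N,
      (pa p1 * pc p1) %/ pa p2 = (pb p2 * pd p2) %/ pd p1,
      (pa p1 %| pa p2)%N & (pd p2 %| pd p1)%N].

Definition rchain (p1 p2 : pattern) : nat := ((pa p1 * pc p1) %/ pa p2)%N.

Definition pstar (p1 p2 : pattern) : pattern :=
  Pattern (pa p1) ((pb p1 * pd p1) %/ pd p2) ((pa p2 * pc p2) %/ pa p1) (pd p2).

Definition in_B (p1 p2 : pattern) {m n : nat} (A : 'M[Cplx]_(m, n)) : Prop :=
  exists k (X1 : 'M[Cplx]_(m, k)) (X2 : 'M[Cplx]_(k, n)),
    [/\ is_factor p1 X1, is_factor p2 X2 & A = (X1 *m X2)%R].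

Section Partition.
Context {m r n : nat} (L : 'M[bool]_(m, r)) (R : 'M[bool]_(r, n)).

(* support of U_i = L[:,i] R[i,:] *)
Definition Usupp (i : 'I_r) : {set 'I_m * 'I_n} :=
  [set xy | L xy.1 i && R i xy.2].

Definition Ppart : {set {set 'I_r}} :=
  equivalence_partition (fun i j => Usupp i == Usupp j) [set: 'I_r].

(* R_P and C_P for the class P containing i : the projections of supp U_i *)
Definition RowsP (i : 'I_r) : {set 'I_m} := [set x | [exists y, (x, y) \in Usupp i]].
Definition ColsP (i : 'I_r) : {set 'I_n} := [set y | [exists x, (x, y) \in Usupp i]].
End Partition.

(* the submatrix A[Rs, Cs] (rows/columns taken in increasing order) *)
Definition subm {F : Type} {m n : nat} (A : 'M[F]_(m, n))
    (Rs : {set 'I_m}) (Cs : {set 'I_n}) : 'M[F]_(#|Rs|, #|Cs|) :=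
  \matrix_(k < #|Rs|, l < #|Cs|) A (enum_val k) (enum_val l).

Definition in_M (p1 p2 : pattern) {m n : nat} (A : 'M[Cplx]_(m, n)) : Prop :=
  let k := ncols p1 in
  forall P, P \in Ppart (Smx p1 m k) (Smx p2 k n) ->
  forall i, i \in P ->
    (\rank (subm A (RowsP (Smx p1 m k) (Smx p2 k n) i)
                   (ColsP (Smx p1 m k) (Smx p2 k n) i)) <= rchain p1 p2)%N.

From HB Require Import structures.
From mathcomp Require Import all_boot all_order all_algebra.
From mathcomp Require Import complex Rstruct.
From mathcomp Require Import ring.
Set Implicit Arguments. Unset Strict Implicit. Unset Printing Implicit Defensive.
Import GRing.Theory.

(* Chainability forces pi1 = (a1, b1, r e, f d2) and pi2 = (e a1, r f, c2, d2).
   Writing an inner index as j = (q r + t) (f d2) + s with t < r and s < f d2,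
   the column S_pi1[:, j] and the row S_pi2[j, :] depend only on the class
   (q, s); hence the rank-one supports U_j come in classes of exactly r indices,
   distinct classes have disjoint supports, and together they cover the support
   of S_(pi1 * pi2).  On the block R_P x C_P of a class, X1 X2 is a product
   through the r indices of the class, so its rank is at most r; conversely a
   rank-r factorization of each block, spread over the r indices of its class,
   yields the two factors. *)

Definition supported_by {V : nmodType} {m n : nat}
    (S : 'M[bool]_(m, n)) (X : 'M[V]_(m, n)) : Prop :=
  forall i j, S i j = false -> X i j = 0%R.

Definition boolmx_mul {m k n : nat} (L : 'M[bool]_(m, k)) (S : 'M[bool]_(k, n))
    : 'M[bool]_(m, n) :=
  \matrix_(x, y) [exists j, L x j && S j y].

Definition mx_restrict {V : nmodType} {m n : nat} (A : 'M[V]_(m, n))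
    (Rs : {set 'I_m}) (Cs : {set 'I_n}) : 'M[V]_(m, n) :=
  \matrix_(x, y) if (x \in Rs) && (y \in Cs) then A x y else 0%R.

Definition enum_selector {R : pzSemiRingType} {m : nat} (Rs : {set 'I_m})
    : 'M[R]_(#|Rs|, m) :=
  \matrix_(t, x) ((enum_val t == x)%:R)%R.

Section MatrixSupports.
Local Open Scope ring_scope.
Variable R : pzSemiRingType.

Lemma supported_mul m k n (L : 'M[bool]_(m, k)) (S : 'M[bool]_(k, n))
    (X1 : 'M[R]_(m, k)) (X2 : 'M[R]_(k, n)) :
  supported_by L X1 -> supported_by S X2 ->
  supported_by (boolmx_mul L S) (X1 *m X2).
Proof.
move=> h1 h2 x y; rewrite mxE => /existsPn no_path; rewrite mxE big1 // => j _.
by case/nandP: (no_path j) => /negbTE hj;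
  [rewrite (h1 _ _ hj) mul0r | rewrite (h2 _ _ hj) mulr0].
Qed.

Lemma subm_mul m k n (X1 : 'M[R]_(m, k)) (X2 : 'M[R]_(k, n))
    (Rs : {set 'I_m}) (Q : {set 'I_k}) (Cs : {set 'I_n}) :
  (forall x y j, x \in Rs -> y \in Cs -> j \notin Q -> X1 x j * X2 j y = 0) ->
  subm (X1 *m X2) Rs Cs = subm X1 Rs Q *m subm X2 Q Cs.
Proof.
move=> outside_Q; apply/matrixP => a b; rewrite !mxE.
under [RHS]eq_bigr do rewrite !mxE.
rewrite -(big_enum_val (fun j => X1 (enum_val a) j * X2 j (enum_val b))) /=.
rewrite [RHS]big_mkcond /=; apply: eq_bigr => j _.
by case: ifPn => // /(outside_Q _ _ _ (enum_valP a) (enum_valP b)).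
Qed.

Lemma sum_enum_val_muln m (Rs : {set 'I_m}) (x : 'I_m) (g : 'I_m -> R) :
  \sum_(t < #|Rs|) g (enum_val t) *+ (enum_val t == x) = if x \in Rs then g x else 0.
Proof.
rewrite -(big_enum_val (fun x' => g x' *+ (x' == x))) /=.
rewrite big_mkcond (bigD1 x) //= big1 => [|i /negbTE neq_ix].
  by rewrite eqxx mulr1n addr0.
by rewrite neq_ix mulr0n; case: ifP.
Qed.

Lemma mx_restrict_subm m n (A : 'M[R]_(m, n)) Rs Cs :
  mx_restrict A Rs Cs = (enum_selector Rs)^T *m subm A Rs Cs *m enum_selector Cs.
Proof.
apply/matrixP => x y; rewrite !mxE.
under eq_bigr => l _ do rewrite !mxE mulr_natr.
under eq_bigr => l _ do under eq_bigr => t _ do rewrite !mxE mulr_natl.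
rewrite (sum_enum_val_muln _ y (fun y' => \sum_t A (enum_val t) y' *+ (enum_val t == x))).
rewrite (sum_enum_val_muln _ x (fun x' => A x' y)).
by case: (x \in Rs); case: (y \in Cs).
Qed.

End MatrixSupports.

Section RankFactorization.
Local Open Scope ring_scope.
Variables (F : fieldType) (m n r : nat) (M : 'M[F]_(m, n)).

Definition lfactor : 'M[F]_(m, r) := col_ebase M *m pid_mx (\rank M).
Definition rfactor : 'M[F]_(r, n) := pid_mx (\rank M) *m row_ebase M.

Lemma mul_rank_factors : (\rank M <= r)%N -> lfactor *m rfactor = M.
Proof.
by move=> rank_le; rewrite mulmxA -(mulmxA (col_ebase M)) pid_mx_id ?mulmx_ebase.
Qed.

End RankFactorization.

Lemma rank_mx_restrict (F : fieldType) m n (A : 'M[F]_(m, n)) Rs Cs :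
  (\rank (mx_restrict A Rs Cs) <= \rank (subm A Rs Cs))%N.
Proof.
rewrite mx_restrict_subm.
exact: leq_trans (mxrankM_maxl _ _) (mxrankM_maxr _ _).
Qed.

Section RankOneSupports.
Variables (m k n : nat) (L : 'M[bool]_(m, k)) (S : 'M[bool]_(k, n)).

Lemma RowsP_supp x i : x \in RowsP L S i -> L x i.
Proof. by rewrite inE => /existsP[y]; rewrite inE => /andP[]. Qed.

Lemma ColsP_supp y i : y \in ColsP L S i -> S i y.
Proof. by rewrite inE => /existsP[x]; rewrite inE => /andP[]. Qed.

Lemma mem_RowsP_ColsP x y i :
  L x i -> S i y -> (x \in RowsP L S i) && (y \in ColsP L S i).
Proof.
by move=> Lxi Siy; rewrite !inE; apply/andP; split; apply/existsP;
  [exists y | exists x]; rewrite inE /= Lxi Siy.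
Qed.

Lemma forall_Ppart (Q : 'I_k -> Prop) :
  (forall P, P \in Ppart L S -> forall i, i \in P -> Q i) <-> forall i, Q i.
Proof.
split=> [allP i | allQ P _ i _]; last exact: allQ.
have : partition (Ppart L S) [set: 'I_k].
  apply: equivalence_partitionP => a b c _ _ _ /=.
  by split=> [|/eqP ->]; rewrite ?eqxx.
case/and3P => /eqP cover_all _ _.
have i_covered : i \in cover (Ppart L S) by rewrite cover_all inE.
by apply: (allP _ (pblock_mem i_covered)); rewrite mem_pblock.
Qed.

End RankOneSupports.

Section FactorizationThroughClasses.
Local Open Scope ring_scope.
Variables (F : fieldType) (m k n r : nat).
Variables (L : 'M[bool]_(m, k)) (S : 'M[bool]_(k, n)).
Variables (cT : eqType) (cls : 'I_k -> cT) (pos : 'I_k -> 'I_r).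

Hypothesis L_cls : forall x i j, cls i = cls j -> L x i = L x j.
Hypothesis S_cls : forall y i j, cls i = cls j -> S i y = S j y.
Hypothesis cls_unique :
  forall x y i j, L x i -> S i y -> L x j -> S j y -> cls i = cls j.
Hypothesis cls_pos_inj : forall i j, cls i = cls j -> pos i = pos j -> i = j.
Hypothesis pos_onto : forall i s, exists2 j, cls j = cls i & pos j = s.

Definition fibre (i : 'I_k) : {set 'I_k} := [set j | cls j == cls i].

Lemma card_fibre i : (#|fibre i| <= r)%N.
Proof.
rewrite -[r]card_ord; apply: (@leq_card_in _ _ pos) => j j'.
by rewrite !inE => /eqP cls_j /eqP cls_j' pos_jj'; apply: cls_pos_inj; congruence.
Qed.

Lemma sum_fibre i (g : 'I_r -> F) :
  \sum_(j | cls j == cls i) g (pos j) = \sum_s g s.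
Proof.
rewrite (partition_big pos xpredT) //; apply: eq_bigr => s _.
have [j_s cls_js pos_js] := pos_onto i s.
rewrite (big_pred1 j_s) ?pos_js // => j /=.
apply/andP/eqP => [[/eqP cls_j /eqP pos_j] | ->]; last by rewrite cls_js pos_js !eqxx.
by apply: cls_pos_inj; congruence.
Qed.

Lemma path_cls x y i j : L x i -> S i y -> (L x j && S j y) = (cls j == cls i).
Proof.
move=> Lxi Siy; apply/andP/eqP => [[Lxj Sjy] | cls_ji]; first exact: cls_unique Sjy Lxi Siy.
by rewrite (L_cls x cls_ji) (S_cls y cls_ji).
Qed.

Lemma Usupp_cls i j : cls i = cls j -> Usupp L S i = Usupp L S j.
Proof.
by move=> cls_ij; apply/setP => -[x y]; rewrite !inE /= (L_cls x cls_ij) (S_cls y cls_ij).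
Qed.

Lemma rank_subm_supported_mul (X1 : 'M[F]_(m, k)) (X2 : 'M[F]_(k, n)) i :
  supported_by L X1 -> supported_by S X2 ->
  (\rank (subm (X1 *m X2) (RowsP L S i) (ColsP L S i)) <= r)%N.
Proof.
move=> X1_supp X2_supp; rewrite (@subm_mul _ _ _ _ _ _ _ (fibre i)); last first.
  move=> x y j /RowsP_supp Lxi /ColsP_supp Siy; rewrite inE.
  case Lxj: (L x j); last by rewrite X1_supp ?mul0r.
  case Sjy: (S j y); last by rewrite X2_supp ?mulr0.
  by rewrite (cls_unique Lxj Sjy Lxi Siy) eqxx.
exact: leq_trans (mxrankM_maxl _ _) (leq_trans (rank_leq_col _) (card_fibre i)).
Qed.

Section Reconstruction.
Variable A : 'M[F]_(m, n).

Definition class_block (i : 'I_k) : 'M[F]_(m, n) :=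
  mx_restrict A (RowsP L S i) (ColsP L S i).

(* Since class_block is constant on classes and lfactor, rfactor are functions of
   the block, all indices of a class share one rank factorization. *)
Definition class_lfactor : 'M[F]_(m, k) :=
  \matrix_(x, j) if L x j then lfactor r (class_block j) x (pos j) else 0.

Definition class_rfactor : 'M[F]_(k, n) :=
  \matrix_(j, y) if S j y then rfactor r (class_block j) (pos j) y else 0.

Lemma class_lfactor_supported : supported_by L class_lfactor.
Proof. by move=> x j Lxj; rewrite mxE Lxj. Qed.

Lemma class_rfactor_supported : supported_by S class_rfactor.
Proof. by move=> j y Sjy; rewrite mxE Sjy. Qed.

Lemma class_block_cls i j : cls i = cls j -> class_block i = class_block j.
Proof. by move=> cls_ij; rewrite /class_block /RowsP /ColsP (Usupp_cls cls_ij). Qed.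

Lemma mul_class_factors :
  supported_by (boolmx_mul L S) A ->
  (forall i, \rank (subm A (RowsP L S i) (ColsP L S i)) <= r)%N ->
  class_lfactor *m class_rfactor = A.
Proof.
move=> A_supp rank_le.
have block_fac i : lfactor r (class_block i) *m rfactor r (class_block i) = class_block i.
  exact/mul_rank_factors/(leq_trans (rank_mx_restrict _ _ _)).
apply/matrixP => x y; rewrite mxE.
under eq_bigr => j _ do rewrite [class_lfactor x j]mxE [class_rfactor j y]mxE.
have [j0 /andP[Lxj0 Sj0y] | no_path] := pickP (fun j => L x j && S j y); last first.
  rewrite big1 => [|j _]; last first.
    by case/nandP: (negbT (no_path j)) => /negbTE ->; rewrite ?mul0r ?mulr0.
  by rewrite A_supp // mxE; apply/existsP => -[j]; rewrite no_path.
rewrite (eq_bigr (fun j => if cls j == cls j0 then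
    lfactor r (class_block j0) x (pos j) * rfactor r (class_block j0) (pos j) y
  else 0)); last first.
  move=> j _; rewrite -(path_cls j Lxj0 Sj0y).
  case Lxj: (L x j); last by rewrite mul0r.
  case Sjy: (S j y); last by rewrite mulr0.
  have /eqP cls_j : cls j == cls j0 by rewrite -(path_cls j Lxj0 Sj0y) Lxj Sjy.
  by rewrite (class_block_cls cls_j).
rewrite -big_mkcond (sum_fibre j0 (fun s =>
  lfactor r (class_block j0) x s * rfactor r (class_block j0) s y)).
have := congr1 (fun B : 'M[F]_(m, n) => B x y) (block_fac j0).
by rewrite !mxE /= => ->; rewrite (mem_RowsP_ColsP Lxj0 Sj0y).
Qed.

End Reconstruction.

Theorem supported_factorization_iff (A : 'M[F]_(m, n)) :
  (exists X1 X2, [/\ supported_by L X1, supported_by S X2 & A = X1 *m X2]) <->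
  supported_by (boolmx_mul L S) A /\
  (forall i, \rank (subm A (RowsP L S i) (ColsP L S i)) <= r)%N.
Proof.
split=> [[X1 [X2 [X1_supp X2_supp ->]]] | [A_supp rank_le]].
  by split=> [|i]; [exact: supported_mul | exact: rank_subm_supported_mul].
exists (class_lfactor A), (class_rfactor A); split.
- exact: class_lfactor_supported.
- exact: class_rfactor_supported.
- by rewrite mul_class_factors.
Qed.

End FactorizationThroughClasses.

Lemma supported_Smx p m n (X : 'M[Cplx]_(m, n)) :
  supported_by (Smx p m n) X <->
  forall (i : 'I_m) (j : 'I_n), S_entry p i j = false -> X i j = 0%R.
Proof. by split=> X_supp i j; have := X_supp i j; rewrite mxE. Qed.

Lemma is_factorE p m n (X : 'M[Cplx]_(m, n)) :
  is_factor p X <-> [/\ m = nrows p, n = ncols p & supported_by (Smx p m n) X].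
Proof.
by split=> [[m_eq [n_eq /supported_Smx]] | [m_eq n_eq /supported_Smx]].
Qed.

Lemma in_BE p1 p2 m n (A : 'M[Cplx]_(m, n)) :
  m = nrows p1 -> n = ncols p2 -> ncols p1 = nrows p2 ->
  in_B p1 p2 A <->
  exists X1 X2, [/\ supported_by (Smx p1 m (ncols p1)) X1,
                    supported_by (Smx p2 (ncols p1) n) X2 & A = (X1 *m X2)%R].
Proof.
move=> m_eq n_eq k_eq; split=> [[k [X1 [X2 []]]] | [X1 [X2 [X1_supp X2_supp ->]]]].
  move=> /is_factorE[_ k_def X1_supp] /is_factorE[_ _ X2_supp] ->.
  by subst k; exists X1, X2.
by exists (ncols p1), X1, X2; split=> //; apply/is_factorE; split.
Qed.

Lemma chainable_shape p1 p2 :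
  pattern_pos p1 -> pattern_pos p2 -> chainable p1 p2 ->
  exists r e f, [/\ 0 < r, 0 < e, 0 < f
    & [/\ pc p1 = r * e, pd p1 = f * pd p2, pa p2 = e * pa p1 & pb p2 = r * f]]%N.
Proof.
move=> [a1_gt0 _ c1_gt0 d1_gt0] [_ _ _ d2_gt0].
move=> [dvd_a2 dvd_d1 r_eq /dvdnP[e a2_eq] /dvdnP[f d1_eq]].
have c1_eq : pc p1 = (rchain p1 p2 * e)%N.
  apply/eqP; rewrite -(eqn_pmul2l a1_gt0) /rchain; apply/eqP.
  by rewrite -{1}(divnK dvd_a2) a2_eq; ring.
have b2_eq : pb p2 = (rchain p1 p2 * f)%N.
  apply/eqP; rewrite -(eqn_pmul2r d2_gt0) /rchain r_eq; apply/eqP.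
  by rewrite -{1}(divnK dvd_d1) d1_eq; ring.
move: c1_gt0 d1_gt0; rewrite c1_eq d1_eq !muln_gt0 => /andP[r_gt0 e_gt0] /andP[f_gt0 _].
by exists (rchain p1 p2), e, f.
Qed.

Lemma ltn_digits q t Q T : (q < Q -> t < T -> q * T + t < Q * T)%N.
Proof.
move=> q_lt t_lt; apply: (@leq_trans (q.+1 * T)); first by rewrite mulSnr ltn_add2l.
by rewrite leq_mul2r q_lt orbT.
Qed.

Section ChainedKronecker.
Variables (a1 b1 c2 d2 r e f : nat).
Hypotheses (a1_gt0 : 0 < a1) (c2_gt0 : 0 < c2) (d2_gt0 : 0 < d2).
Hypotheses (r_gt0 : 0 < r) (e_gt0 : 0 < e) (f_gt0 : 0 < f).

Local Notation D := (f * d2).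
Local Notation p1 := (Pattern a1 b1 (r * e) D).
Local Notation p2 := (Pattern (e * a1) (r * f) c2 d2).
Local Notation m := (nrows p1).
Local Notation k := (ncols p1).
Local Notation n := (ncols p2).
Local Notation L := (Smx p1 m k).
Local Notation S := (Smx p2 k n).

Lemma D_gt0 : 0 < D. Proof. by rewrite muln_gt0 f_gt0 d2_gt0. Qed.

Lemma nrows_p2 : nrows p2 = k. Proof. by rewrite /nrows /ncols /=; ring. Qed.

Lemma rchain_kron : rchain p1 p2 = r.
Proof.
rewrite /rchain /= (_ : a1 * (r * e) = r * (e * a1)); last by ring.
by rewrite mulnK // muln_gt0 e_gt0 a1_gt0.
Qed.

Lemma pstar_kron : pstar p1 p2 = Pattern a1 (b1 * f) (e * c2) d2.
Proof. by rewrite /pstar /= mulnA mulnK // mulnAC mulnK. Qed.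

Lemma nrows_pstar : nrows (pstar p1 p2) = m.
Proof. by rewrite pstar_kron /nrows /=; ring. Qed.

Lemma ncols_pstar : ncols (pstar p1 p2) = n.
Proof. by rewrite pstar_kron /ncols /=; ring. Qed.

Lemma S_entry1 (x : 'I_m) (j : 'I_k) :
  S_entry p1 x j = (x %/ (b1 * D) == j %/ D %/ r %/ e) && (x %% D == j %% D).
Proof. by rewrite /S_entry !ltn_ord /= -!divnMA [r * e * _]mulnC mulnA. Qed.

Lemma S_entry2 (j : 'I_k) (y : 'I_n) :
  S_entry p2 j y = (j %/ D %/ r == y %/ (c2 * d2)) && (j %% D %% d2 == y %% d2).
Proof.
rewrite /S_entry nrows_p2 !ltn_ord /= -divnMA modn_dvdm ?dvdn_mull //.
by rewrite [D * r]mulnC mulnA.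
Qed.

Lemma S_entry_pstar (x : 'I_m) (y : 'I_n) :
  S_entry (pstar p1 p2) x y
    = (x %/ (b1 * D) == y %/ (c2 * d2) %/ e) && (x %% D %% d2 == y %% d2).
Proof.
rewrite /S_entry nrows_pstar ncols_pstar !ltn_ord pstar_kron /=.
by rewrite -divnMA modn_dvdm ?dvdn_mull // !mulnA [c2 * d2 * e]mulnC !mulnA.
Qed.

Definition kron_cls (j : 'I_k) : nat * nat := (j %/ D %/ r, j %% D).

Definition kron_pos (j : 'I_k) : 'I_r := Ordinal (ltn_pmod (j %/ D) r_gt0).

Definition kron_index (q t s : nat) : nat := (q * r + t) * D + s.

Lemma kron_indexK q t s : t < r -> s < D ->
  [/\ kron_index q t s %/ D %/ r = q, kron_index q t s %/ D %% r = t
    & kron_index q t s %% D = s].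
Proof.
move=> t_lt s_lt; have := edivn_eq (q * r + t) s_lt; rewrite edivn_def => -[-> ->].
by have := edivn_eq q t_lt; rewrite edivn_def => -[-> ->].
Qed.

Lemma kron_index_lt q t s : q < a1 * e -> t < r -> s < D -> kron_index q t s < k.
Proof.
move=> q_lt t_lt s_lt; rewrite /ncols /= (_ : a1 * (r * e) * D = a1 * e * r * D).
  exact: ltn_digits (ltn_digits q_lt t_lt) s_lt.
by ring.
Qed.

Lemma kron_index_eq (j : 'I_k) : j = kron_index (j %/ D %/ r) (j %/ D %% r) (j %% D) :> nat.
Proof. by rewrite /kron_index -!divn_eq. Qed.

Lemma kron_cls_lt (j : 'I_k) : j %/ D %/ r < a1 * e.
Proof.
rewrite -divnMA ltn_divLR; last by rewrite muln_gt0 D_gt0 r_gt0.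
have -> : a1 * e * (D * r) = k by rewrite /ncols /=; ring.
exact: ltn_ord.
Qed.

Lemma kron_L_cls x i j : kron_cls i = kron_cls j -> L x i = L x j.
Proof. by case=> q_eq s_eq; rewrite !mxE !S_entry1 q_eq s_eq. Qed.

Lemma kron_S_cls y i j : kron_cls i = kron_cls j -> S i y = S j y.
Proof. by case=> q_eq s_eq; rewrite !mxE !S_entry2 q_eq s_eq. Qed.

Lemma kron_cls_unique x y i j : L x i -> S i y -> L x j -> S j y -> kron_cls i = kron_cls j.
Proof.
rewrite !mxE !S_entry1 !S_entry2 => /andP[_ /eqP xi] /andP[/eqP iy _].
by move=> /andP[_ /eqP xj] /andP[/eqP jy _]; rewrite /kron_cls iy jy -xi -xj.
Qed.

Lemma kron_cls_pos_inj i j : kron_cls i = kron_cls j -> kron_pos i = kron_pos j -> i = j.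
Proof.
case=> q_eq s_eq /(congr1 val) /= t_eq; apply: val_inj => /=.
by rewrite (kron_index_eq i) (kron_index_eq j) q_eq t_eq s_eq.
Qed.

Lemma kron_pos_onto i s : exists2 j, kron_cls j = kron_cls i & kron_pos j = s.
Proof.
have i_mod := ltn_pmod i D_gt0.
exists (Ordinal (kron_index_lt (kron_cls_lt i) (ltn_ord s) i_mod)).
  have [q_eq _ s_eq] := kron_indexK (i %/ D %/ r) (ltn_ord s) i_mod.
  by rewrite /kron_cls /= q_eq s_eq.
apply: val_inj => /=.
by have [_ t_eq _] := kron_indexK (i %/ D %/ r) (ltn_ord s) i_mod.
Qed.

Lemma Smx_pstar : Smx (pstar p1 p2) m n = boolmx_mul L S.
Proof.
apply/matrixP => x y; rewrite !mxE S_entry_pstar.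
apply/andP/existsP => [[/eqP xy_q /eqP xy_s] | [j]]; last first.
  rewrite !mxE S_entry1 S_entry2 => /andP[/andP[/eqP xj /eqP xj_s] /andP[/eqP jy /eqP jy_s]].
  by rewrite xj jy xj_s jy_s !eqxx.
have y_lt : y %/ (c2 * d2) < a1 * e.
  rewrite ltn_divLR; last by rewrite muln_gt0 c2_gt0 d2_gt0.
  have -> : a1 * e * (c2 * d2) = n by rewrite /ncols /=; ring.
  exact: ltn_ord.
have x_mod := ltn_pmod x D_gt0.
exists (Ordinal (kron_index_lt y_lt r_gt0 x_mod)); rewrite !mxE S_entry1 S_entry2 /=.
have [-> _ ->] := kron_indexK (y %/ (c2 * d2)) r_gt0 x_mod.
by rewrite xy_q xy_s !eqxx.
Qed.

Theorem kron_factorization_iff (A : 'M[Cplx]_(m, n)) :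
  in_B p1 p2 A <-> is_factor (pstar p1 p2) A /\ in_M p1 p2 A.
Proof.
rewrite (in_BE A erefl erefl (esym nrows_p2)).
rewrite (supported_factorization_iff kron_L_cls kron_S_cls kron_cls_unique
  kron_cls_pos_inj kron_pos_onto).
rewrite -Smx_pstar is_factorE nrows_pstar ncols_pstar /in_M /= rchain_kron.
split=> [[A_supp rank_le] | [[_ _ A_supp] /forall_Ppart rank_le]].
  by split; [split | apply/forall_Ppart].
by split.
Qed.

End ChainedKronecker.

Theorem lemma4p13 (p1 p2 : pattern) :
  pattern_pos p1 -> pattern_pos p2 -> chainable p1 p2 ->
  forall A : 'M[Cplx]_(nrows p1, ncols p2),
    in_B p1 p2 A <-> (is_factor (pstar p1 p2) A /\ in_M p1 p2 A).
Proof.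
move=> pos1 pos2 chain.
have [r [e [f [r_gt0 e_gt0 f_gt0 [c1_eq d1_eq a2_eq b2_eq]]]]] :=
  chainable_shape pos1 pos2 chain.
case: p1 p2 pos1 pos2 {chain} c1_eq d1_eq a2_eq b2_eq
  => [a1 b1 c1 d1] [a2 b2 c2 d2] [/= a1_gt0 _ _ _] [/= _ _ c2_gt0 d2_gt0] /= -> -> -> ->.
exact: kron_factorization_iff.
Qed.
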